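(* Let $\pi_\theta$ be a policy with parameters $\theta$, acting for horizon $H$, producing states $s_t$, actions $a_t$ and rewards $r_t$ for $t=1,\dots,H$. Let $\gamma\in(0,1)$ be a discount factor and, for $1\le k\le H$, define the truncated (shortened-rollout) policy gradient estimator $$g_k = \sum_{t=k}^H \nabla_\theta \log \pi_\theta(a_t \mid s_t)\cdot G_t, \qquad G_t = \sum_{t'=t}^H \gamma^{t'-t} r_{t'}.$$ Assume $|r_t| \le R_{\max}$ for all $t$ and $\|\nabla_\theta \log \pi_\theta(a_t \mid s_t)\| \le G_{\max}$ for all $t$. Then, with $C = G_{\max}^2 R_{\max}^2$, $$\mathrm{Var}[g_k] \le \frac{C}{(1-\gamma)^2}\left( (H-k+1) - \frac{\gamma\,(1-\gamma^{H-k+1})}{1-\gamma} \right)^2,$$ and this upper bound decreases monotonically as $k$ increases.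
   Context: $g_k$ corresponds to starting rollouts after a verified prefix of $k-1$ steps, so that the remaining horizon is $H-k+1$. For the vector-valued random variable $g_k$, $\mathrm{Var}[g_k]$ denotes $\mathbb{E}\|g_k-\mathbb{E}g_k\|^2$, and $\|\cdot\|$ is the Euclidean norm. *)

From HB Require Import structures.
From mathcomp Require Import all_boot all_order all_algebra.
From mathcomp Require Import all_classical all_reals all_analysis.
Set Implicit Arguments. Unset Strict Implicit. Unset Printing Implicit Defensive.
Import Order.TTheory GRing.Theory Num.Theory.
Import numFieldNormedType.Exports.
Local Open Scope ring_scope.

Definition enorm {R : realType} {d : nat} (x : 'rV[R]_d) : R :=
  Num.sqrt (\sum_(i < d) (x 0 i) ^+ 2).

Definition grad {R : realType} {d : nat} (f : 'rV[R]_d -> R) (theta : 'rV[R]_d)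
  : 'rV[R]_d := \row_(i < d) derive f theta (delta_mx 0 i).

Definition score {R : realType} {d : nat} {Om S A : Type}
  (pi : 'rV[R]_d -> S -> A -> R) (theta : 'rV[R]_d)
  (s : nat -> Om -> S) (a : nat -> Om -> A) (t : nat) (w : Om) : 'rV[R]_d :=
  grad (fun th => ln (pi th (s t w) (a t w))) theta.

Definition disc_return {R : realType} {Om : Type} (H : nat) (gamma : R)
  (r : nat -> Om -> R) (t : nat) (w : Om) : R :=
  \sum_(t <= t' < H.+1) gamma ^+ (t' - t) * r t' w.

Definition g_est {R : realType} {d : nat} {Om S A : Type}
  (pi : 'rV[R]_d -> S -> A -> R) (theta : 'rV[R]_d)
  (s : nat -> Om -> S) (a : nat -> Om -> A) (r : nat -> Om -> R)
  (H : nat) (gamma : R) (k : nat) (w : Om) : 'rV[R]_d :=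
  \sum_(k <= t < H.+1) disc_return H gamma r t w *: score pi theta s a t w.

Definition Evec {R : realType} {dd} {Om : measurableType dd} {d : nat}
  (P : probability Om R) (X : Om -> 'rV[R]_d) : 'rV[R]_d :=
  \row_(i < d) fine (expectation P (fun w => X w 0 i)).

Definition Varvec {R : realType} {dd} {Om : measurableType dd} {d : nat}
  (P : probability Om R) (X : Om -> 'rV[R]_d) : \bar R :=
  expectation P (fun w => (enorm (X w - Evec P X)) ^+ 2).

Definition var_bound {R : realType} (Gmax Rmax gamma : R) (H k : nat) : R :=
  let C := Gmax ^+ 2 * Rmax ^+ 2 in
  C / (1 - gamma) ^+ 2 *
  (((H - k).+1)%:R - gamma * (1 - gamma ^+ (H - k).+1) / (1 - gamma)) ^+ 2.

From HB Require Import structures.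
From mathcomp Require Import all_boot all_order all_algebra.
From mathcomp Require Import all_classical all_reals all_analysis.
From mathcomp Require Import ring lra zify measurable_realfun.
Import Order.TTheory GRing.Theory Num.Theory.
Import numFieldNormedType.Exports.
Local Open Scope ring_scope.

(* Each return G_t is at most R_max (1 + gamma + ... + gamma^(H-t)) in absolute
   value, so the triangle inequality bounds |g_k| pointwise by
   G_max R_max T_(H-k+1), where T_n = sum_(i<n) sum_(j<=i) gamma^j
   = (n - gamma (1 - gamma^n) / (1 - gamma)) / (1 - gamma).  The variance of a
   random vector is the sum of the variances of its coordinates, each at most
   the corresponding second moment, hence Var[g_k] <= E |g_k|^2 <= C T_(H-k+1)^2,
   which is the stated bound.  It decreases in k because T_n increases in n. *)

Lemma cauchy_schwarz (R : realFieldType) (n : nat) (u v : 'I_n -> R) :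
  (\sum_i u i * v i) ^+ 2 <= (\sum_i u i ^+ 2) * (\sum_i v i ^+ 2).
Proof.
have lagrange : \sum_i \sum_j (u i * v j - u j * v i) ^+ 2 =
    (\sum_i u i ^+ 2) * (\sum_j v j ^+ 2) + (\sum_i v i ^+ 2) * (\sum_j u j ^+ 2)
    - 2 * ((\sum_i u i * v i) * (\sum_j u j * v j)).
  rewrite !big_distrlr /= mulr_sumr -big_split -sumrB /=; apply: eq_bigr => i _.
  by rewrite mulr_sumr -big_split -sumrB /=; apply: eq_bigr => j _; ring.
have : 0 <= \sum_i \sum_j (u i * v j - u j * v i) ^+ 2.
  by apply: sumr_ge0 => i _; apply: sumr_ge0 => j _; exact: sqr_ge0.
rewrite lagrange expr2; lra.
Qed.

Section EuclideanNorm.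
Context {R : realType} {d : nat}.
Implicit Types u v : 'rV[R]_d.

Lemma enorm_ge0 v : 0 <= enorm v.
Proof. exact: sqrtr_ge0. Qed.

Lemma enorm_sqr v : enorm v ^+ 2 = \sum_i v 0 i ^+ 2.
Proof. by rewrite sqr_sqrtr // sumr_ge0 // => i _; exact: sqr_ge0. Qed.

Lemma enorm0 : enorm (0 : 'rV[R]_d) = 0.
Proof. by rewrite /enorm big1 ?sqrtr0 // => i _; rewrite mxE expr0n. Qed.

Lemma enormZ (c : R) v : enorm (c *: v) = `|c| * enorm v.
Proof.
rewrite /enorm -sqrtr_sqr -sqrtrM ?sqr_ge0 // mulr_sumr.
by congr Num.sqrt; apply: eq_bigr => i _; rewrite mxE exprMn.
Qed.

Lemma enormD u v : enorm (u + v) <= enorm u + enorm v.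
Proof.
rewrite -[leRHS]ger0_norm ?addr_ge0 ?enorm_ge0 // -sqrtr_sqr ler_wsqrtr //.
have uv : \sum_i u 0 i * v 0 i <= enorm u * enorm v.
  rewrite (le_trans (real_ler_norm _)) ?num_real // -sqrtr_sqr -sqrtrM;
    last by rewrite sumr_ge0 // => i _; exact: sqr_ge0.
  exact/ler_wsqrtr/cauchy_schwarz.
have -> : \sum_i (u + v) 0 i ^+ 2 =
    enorm u ^+ 2 + enorm v ^+ 2 + 2 * \sum_i u 0 i * v 0 i.
  rewrite !enorm_sqr mulr_sumr -!big_split /=; apply: eq_bigr => i _.
  by rewrite mxE; ring.
rewrite sqrrD; lra.
Qed.

Lemma ler_enorm_sum (I : Type) (s : seq I) (F : I -> 'rV[R]_d) :
  enorm (\sum_(i <- s) F i) <= \sum_(i <- s) enorm (F i).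
Proof.
elim: s => [|x s IH]; first by rewrite !big_nil enorm0.
by rewrite !big_cons (le_trans (enormD _ _)) // lerD2l.
Qed.

Lemma ler_coord_enorm v (i : 'I_d) : `|v 0 i| <= enorm v.
Proof.
rewrite -sqrtr_sqr ler_wsqrtr // (bigD1 i) //= lerDl.
by rewrite sumr_ge0 // => j _; exact: sqr_ge0.
Qed.

End EuclideanNorm.

Definition geom_sum {R : pzSemiRingType} (g : R) (m : nat) : R :=
  \sum_(j < m) g ^+ j.

Definition cum_geom_sum {R : pzSemiRingType} (g : R) (n : nat) : R :=
  \sum_(i < n) geom_sum g i.+1.

Lemma geom_sum_closed (R : fieldType) (g : R) m :
  g != 1 -> geom_sum g m = (1 - g ^+ m) / (1 - g).
Proof.
move=> g1; have g1' : 1 - g != 0 by rewrite subr_eq0 eq_sym.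
by rewrite -opprB subrX1 -mulNr opprB mulrAC divff // mul1r.
Qed.

Lemma cum_geom_sum_closed (R : fieldType) (g : R) n : g != 1 ->
  cum_geom_sum g n = (n%:R - g * (1 - g ^+ n) / (1 - g)) / (1 - g).
Proof.
move=> g1; have g1' : 1 - g != 0 by rewrite subr_eq0 eq_sym.
elim: n => [|n IH].
  by rewrite /cum_geom_sum big_ord0 expr0 subrr mulr0 mul0r subrr mul0r.
rewrite /cum_geom_sum big_ord_recr /= -/(cum_geom_sum g n) IH geom_sum_closed //.
by rewrite exprS -natr1; field.
Qed.

Lemma geom_sum_ge0 (R : numDomainType) (g : R) m : 0 <= g -> 0 <= geom_sum g m.
Proof. by move=> g0; rewrite sumr_ge0 // => j _; exact: exprn_ge0. Qed.

Lemma cum_geom_sum_ge0 (R : numDomainType) (g : R) n :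
  0 <= g -> 0 <= cum_geom_sum g n.
Proof. by move=> g0; rewrite sumr_ge0 // => i _; exact: geom_sum_ge0. Qed.

Lemma cum_geom_sum_le (R : numDomainType) (g : R) n1 n2 :
  0 <= g -> (n1 <= n2)%N -> cum_geom_sum g n1 <= cum_geom_sum g n2.
Proof.
move=> g0 /subnKC <-; elim: (n2 - n1)%N => [|m IH]; first by rewrite addn0.
rewrite addnS (le_trans IH) // /cum_geom_sum big_ord_recr /= lerDl.
exact: geom_sum_ge0.
Qed.

Lemma sum_discount_from (R : pzSemiRingType) (g : R) H t : (t <= H.+1)%N ->
  \sum_(t <= t' < H.+1) g ^+ (t' - t) = geom_sum g (H.+1 - t).
Proof.
move=> tH; rewrite -{1}[t]add0n big_addn big_mkord.
by apply: eq_bigr => j _; rewrite addnK.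
Qed.

Lemma sum_geom_sum_tail (R : pzSemiRingType) (g : R) H k : (k <= H)%N ->
  \sum_(k <= t < H.+1) geom_sum g (H.+1 - t) = cum_geom_sum g (H - k).+1.
Proof.
move=> kH; rewrite -{1}[k]add0n big_addn big_nat_rev big_mkord subSn //.
by apply: eq_bigr => i _; congr geom_sum; have := ltn_ord i; lia.
Qed.

Section VarBound.
Variables (R : realType) (Gmax Rmax gamma : R) (H : nat).
Hypothesis gamma_neq1 : gamma != 1.

Lemma var_bound_sqr k : var_bound Gmax Rmax gamma H k =
  (Gmax * Rmax * cum_geom_sum gamma (H - k).+1) ^+ 2.
Proof.
have g1 : 1 - gamma != 0 by rewrite subr_eq0 eq_sym.
by rewrite /var_bound cum_geom_sum_closed //; field.
Qed.

Lemma var_bound_nonincreasing k1 k2 : 0 <= gamma -> (k1 <= k2)%N ->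
  var_bound Gmax Rmax gamma H k2 <= var_bound Gmax Rmax gamma H k1.
Proof.
move=> g0 k12; rewrite !var_bound_sqr !exprMn.
rewrite ler_wpM2l ?(mulr_ge0 (sqr_ge0 _) (sqr_ge0 _)) //.
have le21 : cum_geom_sum gamma (H - k2).+1 <= cum_geom_sum gamma (H - k1).+1.
  by rewrite cum_geom_sum_le // ltnS leq_sub2l.
by rewrite !expr2 ler_pM ?cum_geom_sum_ge0.
Qed.

End VarBound.

Section SecondMoment.
Context d (T : measurableType d) (R : realType) (P : probability T R).

Lemma measurable_sum_in (I : eqType) (s : seq I) (h : I -> T -> R) :
  (forall i, i \in s -> measurable_fun setT (h i)) ->
  measurable_fun setT (fun w => \sum_(i <- s) h i w).
Proof.
move=> mh; rewrite (_ : (fun w => _) =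
    fun w => \sum_(i <- s) if i \in s then h i w else 0); last first.
  by apply/funext => w; rewrite [LHS]big_seq [LHS]big_mkcond.
apply: measurable_sum => i; have [/mh //|_] := boolP (i \in s).
exact: measurable_cst.
Qed.

Lemma bounded_Lfun1 {f : T -> R} {c : R} :
  measurable_fun setT f -> (forall w, `|f w| <= c) -> f \in Lfun P 1.
Proof.
move=> mf fc; apply/Lfun1_integrable.
have Pc := finite_measure_integrable_cst P c measurableT.
apply: (le_integrable measurableT _ _ Pc).
  exact/measurable_EFinP.
by move=> w _; rewrite /= lee_fin (le_trans (fc w)) // ler_norm.
Qed.

Lemma variance_le_expectation_sqr {f : T -> R} {c : R} :
  measurable_fun setT f -> (forall w, `|f w| <= c) ->
  ('V_P[f] <= 'E_P[fun w => (f w ^+ 2)%R])%E.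
Proof.
move=> mf fc; have f1 := bounded_Lfun1 mf fc.
have ff1 : (f * f)%R \in Lfun P 1.
  apply: (bounded_Lfun1 (c := (c * c)%R)); first exact: measurable_funM.
  by move=> w; rewrite normrM ler_pM.
rewrite /variance covarianceE // (_ : (f * f)%R = fun w => (f w ^+ 2)%R) //.
rewrite -(fineK (expectation_fin_num f1)) -(fineK (expectation_fin_num ff1)).
by rewrite -EFinM -EFinB lee_fin gerBl -expr2 sqr_ge0.
Qed.

Lemma expectation_enorm_sqr n (X : T -> 'rV[R]_n) :
  (forall i, measurable_fun setT (fun w => X w 0 i)) ->
  ('E_P[fun w => (enorm (X w) ^+ 2)%R] =
   \sum_(i < n) 'E_P[fun w => (X w 0 i ^+ 2)%R])%E.
Proof.
move=> mX; rewrite expectation.unlock.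
under eq_integral do rewrite enorm_sqr -sumEFin.
rewrite ge0_integral_sum // => [i|i w _]; last by rewrite lee_fin sqr_ge0.
exact/measurable_EFinP/measurable_funX.
Qed.

Lemma Varvec_sum_variance n (X : T -> 'rV[R]_n) :
  (forall i, measurable_fun setT (fun w => X w 0 i)) ->
  Varvec P X = (\sum_(i < n) 'V_P[fun w => (X w 0 i)%R])%E.
Proof.
move=> mX; rewrite /Varvec expectation_enorm_sqr => [|i].
  by apply: eq_bigr => i _; rewrite /variance covariance.unlock; congr expectation;
    apply/funext => w; rewrite /= !mxE expr2.
under eq_fun do rewrite !mxE.
by apply: measurable_funB => //; exact: measurable_cst.
Qed.

Lemma Varvec_le_sqr n (X : T -> 'rV[R]_n) (B : R) :
  (forall i, measurable_fun setT (fun w => X w 0 i)) ->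
  (forall w, enorm (X w) <= B) -> (Varvec P X <= (B ^+ 2)%:E)%E.
Proof.
move=> mX XB; rewrite Varvec_sum_variance //.
have var_le : (\sum_(i < n) 'V_P[fun w => (X w 0 i)%R] <=
    \sum_(i < n) 'E_P[fun w => (X w 0 i ^+ 2)%R])%E.
  apply: lee_sum => i _; apply: (variance_le_expectation_sqr (c := B) (mX i)) => w.
  exact: le_trans (ler_coord_enorm _ i) (XB w).
apply: le_trans var_le _; rewrite -expectation_enorm_sqr // -(expectation_cst P).
apply: expectation_le => [||w|w|]; rewrite ?sqr_ge0 //.
- under eq_fun do rewrite enorm_sqr.
  by apply: measurable_sum => i; exact: measurable_funX.
- by apply: aeW => w; rewrite !expr2 ler_pM ?enorm_ge0.
Qed.

End SecondMoment.

Section TruncatedEstimator.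
Context {R : realType} {dd : measure_display} {Om : measurableType dd} {d : nat}
  {S A : Type} {policy : 'rV[R]_d -> S -> A -> R} {theta : 'rV[R]_d}
  {s : nat -> Om -> S} {a : nat -> Om -> A} {r : nat -> Om -> R}
  {H : nat} {gamma Gmax Rmax : R}.
Local Notation score := (score policy theta s a).
Local Notation g_est := (g_est policy theta s a r H gamma).

Hypothesis gamma_ge0 : 0 <= gamma.
Hypothesis reward_bounded : forall t w, (1 <= t <= H)%N -> `|r t w| <= Rmax.
Hypothesis score_bounded : forall t w, (1 <= t <= H)%N -> enorm (score t w) <= Gmax.
Hypothesis reward_measurable :
  forall t, (1 <= t <= H)%N -> measurable_fun setT (r t).
Hypothesis score_measurable : forall t (i : 'I_d), (1 <= t <= H)%N ->
  measurable_fun setT (fun w => score t w 0 i).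

Lemma abs_disc_return_le t w : (1 <= t <= H)%N ->
  `|disc_return H gamma r t w| <= Rmax * geom_sum gamma (H.+1 - t).
Proof.
move=> /andP[t1 tH]; rewrite -sum_discount_from ?leqW // mulr_sumr.
apply: le_trans (ler_norm_sum _ _ _) _; apply: ler_sum_nat => t' /andP[tt' t'H].
rewrite normrM ger0_norm ?exprn_ge0 // mulrC ler_wpM2r ?exprn_ge0 //.
by rewrite reward_bounded // (leq_trans t1 tt') -ltnS.
Qed.

Lemma enorm_g_est_le k w : (1 <= k)%N -> (k <= H)%N ->
  enorm (g_est k w) <= Gmax * Rmax * cum_geom_sum gamma (H - k).+1.
Proof.
move=> k1 kH; rewrite /g_est (le_trans (ler_enorm_sum _ _ _)) //.
rewrite -sum_geom_sum_tail // mulr_sumr; apply: ler_sum_nat => t /andP[kt tH].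
have t1H : (1 <= t <= H)%N by rewrite (leq_trans k1 kt) -ltnS.
rewrite enormZ -[leRHS]mulrA [leRHS]mulrC.
by rewrite ler_pM ?normr_ge0 ?enorm_ge0 ?abs_disc_return_le ?score_bounded.
Qed.

Lemma measurable_g_est_coord k (i : 'I_d) : (1 <= k)%N ->
  measurable_fun setT (fun w => g_est k w 0 i).
Proof.
move=> k1; rewrite (_ : (fun w => _) = fun w =>
    \sum_(k <= t < H.+1) disc_return H gamma r t w * score t w 0 i); last first.
  by apply/funext => w; rewrite summxE; apply: eq_bigr => t _; rewrite mxE.
apply: measurable_sum_in => t; rewrite mem_index_iota => /andP[kt tH].
have t1H : (1 <= t <= H)%N by rewrite (leq_trans k1 kt) -ltnS.
apply: measurable_funM; last exact: score_measurable.
apply: measurable_sum_in => t'; rewrite mem_index_iota => /andP[tt' t'H].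
apply: measurable_funM; first exact: measurable_cst.
by apply: reward_measurable; rewrite (leq_trans (leq_trans k1 kt) tt') -ltnS.
Qed.

End TruncatedEstimator.

Theorem theorem3 (R : realType) (dd : measure_display) (Om : measurableType dd)
  (P : probability Om R) (d : nat) (S A : Type)
  (pi : 'rV[R]_d -> S -> A -> R) (theta : 'rV[R]_d)
  (s : nat -> Om -> S) (a : nat -> Om -> A) (r : nat -> Om -> R)
  (H : nat) (gamma Gmax Rmax : R) :
  0 < gamma < 1 ->
  (forall t, (1 <= t <= H)%N -> measurable_fun setT (r t)) ->
  (forall t (i : 'I_d), (1 <= t <= H)%N ->
     measurable_fun setT (fun w => score pi theta s a t w 0 i)) ->
  (forall t w, (1 <= t <= H)%N -> `|r t w| <= Rmax) ->
  (forall t w, (1 <= t <= H)%N -> enorm (score pi theta s a t w) <= Gmax) ->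
  (forall k, (1 <= k <= H)%N ->
     (Varvec P (g_est pi theta s a r H gamma k) <=
        (var_bound Gmax Rmax gamma H k)%:E)%E)
  /\
  (forall k1 k2, (1 <= k1)%N -> (k1 <= k2)%N -> (k2 <= H)%N ->
     var_bound Gmax Rmax gamma H k2 <= var_bound Gmax Rmax gamma H k1).
Proof.
move=> /andP[gamma_gt0 gamma_lt1] r_meas score_meas r_bnd score_bnd.
have gamma_neq1 : gamma != 1 by rewrite lt_eqF.
have gamma_ge0 := ltW gamma_gt0.
split=> [k /andP[k_ge1 k_leH] | k1 k2 _ k12 _]; last exact: var_bound_nonincreasing.
rewrite var_bound_sqr //; apply: Varvec_le_sqr => [i|w].
- exact: measurable_g_est_coord.
- exact: enorm_g_est_le.
Qed.
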